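(* Let $L$ be the Kirchhoff matrix and $\bar J$ the normalized matrix of maximum out-forests of a weighted digraph $\Gamma$. Then $\bar J$ is the eigenprojection of $L$, i.e., $\bar J$ is the idempotent matrix with range $N(L^{\nu})$ and kernel $R(L^{\nu})$, where $\nu$ is the index of $L$ (in fact $\nu=1$, so the range of $\bar J$ is $N(L)$ and its kernel is $R(L)$).
   Context: A weighted digraph $\Gamma$ has vertex set $\{1,\dots,n\}$, no loops, and each arc $j\to i$ ($j\ne i$) has a positive weight $a_{ij}$; $a_{ij}=0$ if there is no such arc. Its Kirchhoff matrix $L=[\ell_{ij}]$ has $\ell_{ij}=-a_{ij}$ for $j\ne i$ and $\ell_{ii}=\sum_{k\ne i}a_{ik}$. An out-forest of $\Gamma$ is a spanning subgraph whose weak components are diverging trees (rooted directed trees with paths from the root to all vertices); a maximum out-forest is one with the maximum number of arcs. The weight of a subgraph is the product of its arc weights. The normalized matrix of maximum out-forests $\bar J$ has $\bar J_{ij}$ equal to the total weight of the maximum out-forests of $\Gamma$ in which $i$ belongs to the tree rooted at $j$, divided by the total weight of all maximum out-forests. For a square matrix $A$, $R(A)$ and $N(A)$ denote range and kernel, and the index of $A$ is the least $k\ge0$ with $\operatorname{rank}A^{k+1}=\operatorname{rank}A^k$. *)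

From Stdlib Require Import Classical.
From HB Require Import structures.
From mathcomp Require Import all_boot all_order all_algebra.
Set Implicit Arguments. Unset Strict Implicit. Unset Printing Implicit Defensive.
Import Order.TTheory GRing.Theory Num.Theory.
Local Open Scope ring_scope.

(* A weighted digraph on vertices 'I_n is given by a : 'M[R]_n with
   a i j > 0 the weight of the arc j -> i, a i j = 0 if there is no arc,
   and a i i = 0 (no loops). *)

(* Arcs are encoded as pairs (tail, head): (j, i) stands for j -> i. *)
Definition arc_set n := {set 'I_n * 'I_n}.

Section Forests.
Variables (R : realFieldType) (n : nat) (a : 'M[R]_n).

Definition kirchhoff : 'M[R]_n :=
  \matrix_(i, j) (if i == j then \sum_(k | k != i) a i k else - a i j).

Definition subgraph (F : arc_set n) : bool :=
  [forall e in F, (e.1 != e.2) && (0 < a e.2 e.1)].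

Definition darc (F : arc_set n) : rel 'I_n := fun u v => (u, v) \in F.
Definition warc (F : arc_set n) : rel 'I_n :=
  fun u v => ((u, v) \in F) || ((v, u) \in F).

Definition wcomp (F : arc_set n) (v : 'I_n) : {set 'I_n} :=
  [set u | connect (warc F) v u].

Definition arcs_in (F : arc_set n) (C : {set 'I_n}) : arc_set n :=
  [set e in F | (e.1 \in C) && (e.2 \in C)].

Definition diverging_tree_comp (F : arc_set n) (C : {set 'I_n}) : bool :=
  [&& #|arcs_in F C| == #|C|.-1,
      [forall u in C, forall v in C, connect (warc (arcs_in F C)) u v] &
      [exists r in C, forall v in C, connect (darc (arcs_in F C)) r v]].

Definition out_forest (F : arc_set n) : bool :=
  subgraph F && [forall v, diverging_tree_comp F (wcomp F v)].

Definition max_forest_size : nat :=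
  \max_(F : arc_set n | out_forest F) #|F|.

Definition max_out_forest (F : arc_set n) : bool :=
  out_forest F && (#|F| == max_forest_size).

Definition weight (F : arc_set n) : R := \prod_(e in F) a e.2 e.1.

Definition in_tree_rooted (F : arc_set n) (i j : 'I_n) : bool :=
  (j \in wcomp F i) && [forall v in wcomp F i, connect (darc F) j v].

Definition Jbar : 'M[R]_n :=
  \matrix_(i, j)
    ((\sum_(F : arc_set n | max_out_forest F && in_tree_rooted F i j) weight F)
     / (\sum_(F : arc_set n | max_out_forest F) weight F)).

End Forests.

Lemma index_exists (R : fieldType) (n : nat) (A : 'M[R]_n) :
  exists k, \rank (A ^+ k.+1) == \rank (A ^+ k).
Proof.
apply: NNPP => H.
have lt k : (\rank (A ^+ k.+1) < \rank (A ^+ k))%N.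
  rewrite ltn_neqAle; apply/andP; split.
    by apply/negP => E; apply: H; exists k.
  by rewrite GRing.exprS; apply: mxrankM_maxr.
have le k : (\rank (A ^+ k) + k <= n)%N.
  elim: k => [|k IH]; first by rewrite addn0 rank_leq_col.
  by rewrite addnS; apply: leq_trans IH; rewrite ltn_add2r.
by have := le n.+1; rewrite addnS ltnNge leq_addl.
Qed.

Definition mxindex (R : fieldType) (n : nat) (A : 'M[R]_n) : nat :=
  ex_minn (index_exists A).

From HB Require Import structures.
From mathcomp Require Import all_boot all_order all_algebra.
Set Implicit Arguments. Unset Strict Implicit. Unset Printing Implicit Defensive.
Import Order.TTheory GRing.Theory Num.Theory.

(* 1. Out-forests are exactly the "directed forests" made of arcs of the
      digraph: arc sets with at most one arc entering each vertex and a height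
      strictly increasing along arcs.  Every vertex v then has a root
      [root_of F v], and J i j is the total weight of the maximum out-forests
      F with root_of F i = j, divided by the weight of all of them.
   2. Two arc exchanges, [reattach] (give a vertex a new parent) and [reroot]
      (make a vertex the root of its tree), send maximum out-forests to
      maximum out-forests and change weights by an explicit factor.  They
      give a weight-preserving involution proving L J = 0 and a
      weight-preserving bijection proving J L = 0.
   3. A maximum principle for vectors x with L x = 0 shows that J x and x
      agree at the roots of a maximum out-forest, and then everywhere.
   4. Linear algebra: a matrix P with L P = P L = 0 fixing N(L) is idempotent
      with range N(L) and kernel R(L), and N(L^2) = N(L); since L is singular,
      its index is 1. *)

Lemma connect_backward (T : finType) (e : rel T) (Q : pred T) x y :
  (forall u v, e u v -> Q v -> Q u) -> connect e x y -> Q y -> Q x.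
Proof.
move=> cl /connectP [p]; elim: p x => [|z p IH] x /=; first by move=> _ ->.
by case/andP=> exz pz lz Qy; apply: cl exz _; apply: IH pz lz Qy.
Qed.

Section DirectedForests.
Variable n : nat.
Implicit Types F G : arc_set n.

(* Directed forests: every vertex has at most one incoming arc, and some
   height function strictly increases along arcs (so there are no cycles). *)
Definition is_root F v := [forall u, (u, v) \notin F].
Definition indeg_le1 F := forall u u' v, (u, v) \in F -> (u', v) \in F -> u = u'.
Definition has_height F :=
  exists h : 'I_n -> nat, forall u v, (u, v) \in F -> (h u < h v)%N.
Definition dforest F := indeg_le1 F /\ has_height F.

Lemma is_rootP F v : reflect (forall u, (u, v) \notin F) (is_root F v).
Proof. exact: forallP. Qed.

Lemma not_rootP F v : reflect (exists u, (u, v) \in F) (~~ is_root F v).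
Proof.
apply: (iffP forallPn) => [[u /negPn]|[u uv]]; first by exists u.
by exists u; rewrite uv.
Qed.

Lemma last_arc F x v : connect (darc F) x v -> x != v ->
  exists2 u, (u, v) \in F & connect (darc F) x u.
Proof.
case/connectP=> p; case/lastP: p => [|q y] /=; first by move=> _ ->; rewrite eqxx.
rewrite rcons_path last_rcons => /andP[pq e] -> _.
by exists (last x q) => //; apply/connectP; exists q.
Qed.

Lemma first_arc F x v : connect (darc F) x v -> x != v ->
  exists2 c, (x, c) \in F & connect (darc F) c v.
Proof.
case/connectP=> [[|c p]] /=; first by move=> _ ->; rewrite eqxx.
by case/andP=> xc pc -> _; exists c => //; apply/connectP; exists p.
Qed.

Lemma height_ind F (P : 'I_n -> Prop) : has_height F ->
  (forall v, (forall u, (u, v) \in F -> P u) -> P v) -> forall v, P v.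
Proof.
case=> h hP IH v; have [k] := ubnP (h v); elim: k v => // k IHk v hv.
by apply: IH => u uv; apply: IHk; apply: leq_trans (hP _ _ uv) hv.
Qed.

Lemma reach_root F u v : is_root F v -> connect (darc F) u v -> u = v.
Proof.
move=> /is_rootP rv uv; apply/eqP.
apply: (connect_backward (Q := fun w => w == v)) uv _ => //.
by move=> x y xy /eqP yv; move: xy; rewrite /darc yv (negbTE (rv x)).
Qed.

Lemma arc_acyclic F u v : has_height F -> (u, v) \in F -> ~~ connect (darc F) v u.
Proof.
case=> h hP uv; apply/negP => vu.
have : (h v <= h u)%N.
  apply: (connect_backward (Q := fun w => h w <= h u)%N) vu _ => //.
  by move=> x y xy hy; apply: leq_trans hy; apply: ltnW; apply: hP.
by rewrite leqNgt hP.
Qed.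

Lemma exists_root F v : has_height F -> exists2 r, is_root F r & connect (darc F) r v.
Proof.
move=> hF; move: v; apply: (height_ind hF) => v IH.
case: (boolP (is_root F v)) => rv; first by exists v.
case/not_rootP: rv => u uv; have [r rr ru] := IH u uv.
by exists r => //; apply: connect_trans ru (connect1 _).
Qed.

Lemma ancestors_comparable F x y v : dforest F ->
  connect (darc F) x v -> connect (darc F) y v ->
  connect (darc F) x y || connect (darc F) y x.
Proof.
case=> i1 hF; move: v x y; apply: (height_ind hF) => v IH x y xv yv.
case: (eqVneq x v) => [->|xnv]; first by rewrite yv orbT.
case: (eqVneq y v) => [->|ynv]; first by rewrite xv.
have [u uv xu] := last_arc xv xnv; have [u' u'v yu'] := last_arc yv ynv.
by rewrite (i1 _ _ _ u'v uv) in yu'; apply: IH uv _ _ xu yu'.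
Qed.

Definition root_of F v := odflt v [pick r | is_root F r && connect (darc F) r v].

Lemma root_ofP F v : has_height F ->
  is_root F (root_of F v) /\ connect (darc F) (root_of F v) v.
Proof.
move=> hF; rewrite /root_of; case: pickP => [r /andP[]//|none].
by have [r rr rv] := exists_root v hF; move: (none r); rewrite rr rv.
Qed.

Section RootOf.
Variable F : arc_set n.
Hypothesis fF : dforest F.

Lemma root_of_is_root v : is_root F (root_of F v).
Proof. by case: (root_ofP v fF.2). Qed.

Lemma root_of_reach v : connect (darc F) (root_of F v) v.
Proof. by case: (root_ofP v fF.2). Qed.

Lemma root_ofE r v : is_root F r -> connect (darc F) r v -> root_of F v = r.
Proof.
move=> rr rv; have rv' := root_of_reach v.
case/orP: (ancestors_comparable fF rv' rv) => [/(reach_root rr)//|].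
by move/(reach_root (root_of_is_root v))->.
Qed.

Lemma root_of_connect u v : connect (darc F) u v -> root_of F u = root_of F v.
Proof.
move=> uv; apply/esym/root_ofE; first exact: root_of_is_root.
exact: connect_trans (root_of_reach u) uv.
Qed.

Lemma root_of_arc u v : (u, v) \in F -> root_of F u = root_of F v.
Proof. by move=> uv; apply: root_of_connect; apply: connect1. Qed.

Lemma root_of_root r : is_root F r -> root_of F r = r.
Proof. by move=> rr; apply: root_ofE. Qed.

Lemma root_of_idem v : root_of F (root_of F v) = root_of F v.
Proof. exact/root_of_root/root_of_is_root. Qed.

Lemma darc_warc_connect x y : connect (darc F) x y -> connect (warc F) x y.
Proof. by apply: connect_sub => u v uv; apply: connect1; apply/orP; left. Qed.

Lemma wcomp_root_of v : wcomp F v = [set u | root_of F u == root_of F v].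
Proof.
have wsym : symmetric (warc F) by move=> x y; rewrite /warc orbC.
apply/setP => u; rewrite !inE; apply/idP/idP.
  move=> vu; rewrite eq_sym.
  apply: (connect_backward (Q := fun w => root_of F w == root_of F u)) vu _ => //.
  move=> x y /orP[xy|yx] /eqP <-; apply/eqP; first exact: root_of_arc.
  exact/esym/root_of_arc.
move/eqP=> e; apply: (@connect_trans _ _ (root_of F v)).
  by rewrite (sym_connect_sym wsym); apply/darc_warc_connect/root_of_reach.
by rewrite -e; apply/darc_warc_connect/root_of_reach.
Qed.

Lemma in_tree_rootedE i j : in_tree_rooted F i j = (root_of F i == j).
Proof.
rewrite /in_tree_rooted wcomp_root_of inE; apply/idP/idP.
  case/andP=> /eqP ej /forall_inP H.
  have := H (root_of F i); rewrite inE root_of_idem eqxx => /(_ isT) jr.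
  by rewrite -(reach_root (root_of_is_root i) jr) eqxx.
move/eqP=> <-; rewrite root_of_idem eqxx /=; apply/forall_inP => v.
by rewrite inE => /eqP <-; apply: root_of_reach.
Qed.

End RootOf.
End DirectedForests.

Section OutForests.
Variable n : nat.
Implicit Types F G : arc_set n.

Lemma arcs_inE F (C : {set 'I_n}) e :
  (e \in arcs_in F C) = [&& e \in F, e.1 \in C & e.2 \in C].
Proof. by rewrite /arcs_in inE. Qed.

Lemma wcomp_arc F v x y : (x, y) \in F -> (x \in wcomp F v) = (y \in wcomp F v).
Proof.
move=> xy; rewrite !inE; apply/idP/idP => H; apply: connect_trans H (connect1 _);
  by rewrite /warc xy ?orbT.
Qed.

Lemma tree_reach F r u : dforest F -> root_of F u = r ->
  connect (darc (arcs_in F [set v | root_of F v == r])) r u.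
Proof.
move=> fF; move: u; apply: (height_ind fF.2) => u IH ru.
case: (boolP (is_root F u)) => [ur|/not_rootP [p pu]].
  by rewrite -ru root_of_root.
have rp : root_of F p = r by rewrite (root_of_arc fF pu).
apply: connect_trans (IH p pu rp) (connect1 _).
by rewrite /darc arcs_inE pu /= !inE rp ru eqxx.
Qed.

Lemma dforest_diverging F : dforest F -> forall v, diverging_tree_comp F (wcomp F v).
Proof.
move=> fF v; rewrite wcomp_root_of //; set r := root_of F v.
set C := [set u | root_of F u == r].
have rC : r \in C by rewrite inE /r root_of_idem.
have rr : is_root F r by apply: root_of_is_root.
have reachC u : u \in C -> connect (darc (arcs_in F C)) r u.
  by rewrite inE => /eqP; apply: tree_reach.
apply/and3P; split.
- (* arcs of the tree correspond to their heads, i.e. to C minus the root *)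
  have inj : {in arcs_in F C &, injective (fun e : 'I_n * 'I_n => e.2)}.
    move=> [u1 v1] [u2 v2]; rewrite !arcs_inE /= => /andP[e1 _] /andP[e2 _] /= eq.
    by subst v2; rewrite (fF.1 _ _ _ e1 e2).
  rewrite -(card_in_imset inj).
  have -> : [set e.2 | e in arcs_in F C] = C :\ r.
    apply/setP => w; rewrite in_setD1; apply/imsetP/andP.
      case=> [[u w']] /=; rewrite arcs_inE /= => /and3P[uw _ wC] ->; split => //.
      by apply/eqP => wr; move/is_rootP: rr => /(_ u); rewrite -wr uw.
    case=> wr wC; have : ~~ is_root F w.
      by apply/negP => wroot; move: wC; rewrite inE root_of_root // (negbTE wr).
    case/not_rootP=> p pw; exists (p, w) => //.
    by move: wC; rewrite arcs_inE pw /= !inE (root_of_arc fF pw) => ->.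
  by rewrite (cardsD1 r C) rC.
- have wsym : symmetric (warc (arcs_in F C)) by move=> x y; rewrite /warc orbC.
  have wreach u : u \in C -> connect (warc (arcs_in F C)) r u.
    move/reachC; apply: connect_sub => x y xy.
    by apply: connect1; apply/orP; left.
  apply/forall_inP => u uC; apply/forall_inP => w wC.
  apply: (@connect_trans _ _ r); last exact: wreach.
  by rewrite (sym_connect_sym wsym); apply: wreach.
- by apply/exists_inP; exists r => //; apply/forall_inP => w /reachC.
Qed.

(* A diverging tree component has a root of F that reaches all of it, and
   distinct arcs of the component have distinct heads (the component has
   exactly #|C| - 1 arcs, one entering each non-root vertex). *)
Lemma diverging_root F v : diverging_tree_comp F (wcomp F v) ->
  exists r, [/\ r \in wcomp F v, is_root F r,
     forall w, w \in wcomp F v -> connect (darc F) r w &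
     {in arcs_in F (wcomp F v) &, injective (fun e : 'I_n * 'I_n => e.2)}].
Proof.
set C := wcomp F v; set A := arcs_in F C.
case/and3P=> /eqP cardA _ /exists_inP [r rC /forall_inP rA].
set Hd := [set e.2 | e in A].
have sub1 : C :\ r \subset Hd.
  apply/subsetP => w; rewrite in_setD1 => /andP[wr wC].
  have rw : r != w by rewrite eq_sym.
  have [u uw _] := last_arc (rA w wC) rw.
  by apply/imsetP; exists (u, w).
have cC : #|C| = (#|C :\ r|).+1 by rewrite (cardsD1 r C) rC.
have cHd : #|Hd| = #|A|.
  apply/eqP; rewrite eqn_leq leq_imset_card cardA cC /=.
  exact: subset_leq_card.
have rHd : r \notin Hd.
  apply/negP => rH; have : C \subset Hd.
    apply/subsetP => w wC; case: (eqVneq w r) => [->//|wr].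
    by apply: (subsetP sub1); rewrite in_setD1 wr wC.
  by move/subset_leq_card; rewrite cC cHd cardA cC ltnn.
exists r; split => //.
- apply/is_rootP => u; apply/negP => ur; move/negP: rHd; apply; apply/imsetP.
  by exists (u, r) => //; rewrite /A arcs_inE ur /= (wcomp_arc v ur) rC.
- move=> w wC; move: (rA w wC); apply: connect_sub => x y xy; apply: connect1.
  by move: xy; rewrite /darc arcs_inE => /andP[].
- exact/imset_injP/eqP.
Qed.

(* If all weak components are diverging trees, F is a directed forest; the
   number of ancestors of a vertex serves as a height. *)
Lemma diverging_dforest F : (forall v, diverging_tree_comp F (wcomp F v)) -> dforest F.
Proof.
move=> H; have vC v : v \in wcomp F v by rewrite inE connect0.
have i1 : indeg_le1 F.
  move=> u u' w uw u'w; have [r [_ _ _ inj]] := diverging_root (H w).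
  have := inj (u, w) (u', w); rewrite !arcs_inE uw u'w /= (wcomp_arc w uw).
  by rewrite (wcomp_arc w u'w) vC => /(_ isT isT erefl) [].
split => //.
have nocyc u w : (u, w) \in F -> ~~ connect (darc F) w u.
  move=> uw; apply/negP => wu.
  have [r [rC rr rreach _]] := diverging_root (H w).
  (* every vertex on the path from r to w lies on a cycle through w *)
  have : connect (darc F) w r && connect (darc F) r w.
    apply: (connect_backward (Q := fun x => connect (darc F) w x && connect (darc F) x w))
      (rreach w (vC w)) _; last by rewrite !connect0.
    move=> x y xy /andP[wy yw]; rewrite (connect_trans (connect1 xy) yw) andbT.
    case: (eqVneq w y) => [ey|wny]; first by subst y; rewrite (i1 _ _ _ xy uw).
    by have [x' x'y wx'] := last_arc wy wny; rewrite (i1 _ _ _ xy x'y).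
  case/andP=> /(reach_root rr) wr _; move/is_rootP: rr => /(_ u).
  by rewrite -wr uw.
exists (fun w => #|[set u | connect (darc F) u w]|) => u w uw.
apply: proper_card; apply/properP; split.
  by apply/subsetP => x; rewrite !inE => xu; apply: connect_trans xu (connect1 uw).
by exists w; rewrite !inE ?connect0 // (negbTE (nocyc _ _ uw)).
Qed.

Lemma out_forestP (R : realFieldType) (a : 'M[R]_n) F :
  out_forest a F <-> subgraph a F /\ dforest F.
Proof.
rewrite /out_forest; split.
  by case/andP=> sF /forallP H; split => //; apply: diverging_dforest.
by case=> sF fF; rewrite sF /=; apply/forallP; apply: dforest_diverging.
Qed.

End OutForests.

Section Exchange.
Variable n : nat.
Implicit Types F G : arc_set n.

Definition exchange F w e : arc_set n := [set e' in F | e'.2 != w] :|: [set e].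

(* The two surgeries of the proof: [reattach F i k] gives i the new parent k;
   [reroot F r w x] makes w a root and hangs the old root r below x. *)
Definition reattach F i k := exchange F i (k, i).
Definition reroot F r w x := exchange F w (x, r).

Lemma exchangeE F w e e' :
  (e' \in exchange F w e) = ((e' \in F) && (e'.2 != w)) || (e' == e).
Proof. by rewrite !inE. Qed.

Lemma exchange_new F w e : e \in exchange F w e.
Proof. by rewrite exchangeE eqxx orbT. Qed.

Lemma drop_in_arc F p w : indeg_le1 F -> (p, w) \in F ->
  [set e in F | e.2 != w] = F :\ (p, w).
Proof.
move=> i1 pw; apply/setP => [[u v]]; rewrite !inE /= xpair_eqE.
case: (eqVneq v w) => [->|vw]; last by rewrite andbF andbT.
rewrite andbF andbT; case: (boolP ((u, w) \in F)) => [uw|]; last by rewrite andbF.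
by rewrite (i1 _ _ _ uw pw) eqxx.
Qed.

Lemma exchange_card F w e p : indeg_le1 F -> (p, w) \in F -> e \notin F :\ (p, w) ->
  #|exchange F w e| = #|F|.
Proof.
move=> i1 pw eF; rewrite /exchange (drop_in_arc i1 pw) setUC cardsU1 eF.
by rewrite (cardsD1 (p, w) F) pw.
Qed.

Lemma reattach_root_card F i k : is_root F i -> #|reattach F i k| = #|F|.+1.
Proof.
move=> /is_rootP ri; rewrite /reattach /exchange.
have -> : [set e in F | e.2 != i] = F.
  apply/setP => [[u v]]; rewrite inE /=.
  by case: (eqVneq v i) => [->|]; rewrite ?andbT // (negbTE (ri u)).
by rewrite setUC cardsU1 ri.
Qed.

Lemma reattach_fresh F i k p : indeg_le1 F -> (p, i) \in F -> (k, i) \notin F :\ (p, i).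
Proof.
move=> i1 pi; rewrite !inE negb_and negbK.
by case: (boolP ((k, i) \in F)) => [ki|]; rewrite ?orbT // (i1 _ _ _ ki pi) eqxx.
Qed.

Lemma root_fresh F r x e : is_root F r -> (x, r) \notin F :\ e.
Proof. by move=> /is_rootP rr; rewrite !inE negb_and rr orbT. Qed.

Lemma exchange_inv F w e p : indeg_le1 F -> (p, w) \in F ->
  (forall u, (u, e.2) \in F -> u = p /\ e.2 = w) ->
  exchange (exchange F w e) e.2 (p, w) = F.
Proof.
move=> i1 pw He; apply/setP => [[u v]]; rewrite !exchangeE /=.
case: (eqVneq v e.2) => [->|ve].
  rewrite andbF /=; apply/eqP/idP => [[-> ->] //|].
  by case/He=> -> ->.
have -> : ((u, v) == e) = false by case: e He ve => x y /= _; apply: contraNF => /eqP[_ ->].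
rewrite orbF andbT xpair_eqE; case: (eqVneq v w) => [->|vw]; rewrite ?andbF ?andbT ?orbF //=.
by apply/eqP/idP => [-> //|uw]; rewrite (i1 _ _ _ uw pw).
Qed.

Lemma reattach_inv F i k p : indeg_le1 F -> (p, i) \in F ->
  reattach (reattach F i k) i p = F.
Proof. by move=> i1 pi; apply: exchange_inv => // u ui; rewrite (i1 _ _ _ ui pi). Qed.

Lemma reroot_inv F r w x y : indeg_le1 F -> is_root F r -> (y, w) \in F ->
  reroot (reroot F r w x) w r y = F.
Proof.
move=> i1 /is_rootP rr yw; apply: exchange_inv => // u /=.
by rewrite (negbTE (rr u)).
Qed.

Lemma unreachable_arc F i u v : indeg_le1 F -> (u, v) \in F -> v != i ->
  ~~ connect (darc F) i u -> ~~ connect (darc F) i v.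
Proof.
move=> i1 uv vi; apply: contra => iv.
have iv' : i != v by rewrite eq_sym.
have [u' u'v iu'] := last_arc iv iv'.
by rewrite (i1 _ _ _ uv u'v).
Qed.

Lemma reattach_is_root F i k y : is_root F y -> y != i -> is_root (reattach F i k) y.
Proof.
move=> /is_rootP ry yi; apply/is_rootP => u; rewrite exchangeE negb_or.
by rewrite (negbTE (ry u)) /= xpair_eqE negb_and yi orbT.
Qed.

Section Reattach.
Variables (F : arc_set n) (i k : 'I_n).
Hypotheses (fF : dforest F) (nik : ~~ connect (darc F) i k).
Local Notation G := (reattach F i k).

Lemma reattach_keep u v : (u, v) \in F -> v != i -> (u, v) \in G.
Proof. by move=> uv vi; rewrite exchangeE uv vi. Qed.

(* Re-attaching i below a vertex k outside its subtree keeps a forest: the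
   subtree of i is lifted above the height of k. *)
Lemma reattach_dforest : dforest G.
Proof.
case: fF => i1 [h hP]; split.
  move=> u u' v; rewrite !exchangeE.
  case/orP=> [/andP[uv vi]|/eqP[eu ev]]; case/orP=> [/andP[u'v vi']|/eqP[eu' ev']].
  - exact: i1 uv u'v.
  - by rewrite ev' eqxx in vi.
  - by rewrite ev eqxx in vi'.
  - by rewrite eu eu'.
exists (fun v => h v + (connect (darc F) i v) * (h k).+1)%N.
move=> u v; rewrite exchangeE => /orP[/andP[uv vi]|/eqP[-> ->]].
  case: (boolP (connect (darc F) i u)) => iu.
    by rewrite (connect_trans iu (connect1 uv)) ltn_add2r; apply: hP.
  by rewrite (negbTE (unreachable_arc i1 uv vi iu)) !mul0n !addn0; apply: hP.
by rewrite (negbTE nik) connect0 mul0n addn0 mul1n addnS ltnS leq_addl.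
Qed.

Lemma reattach_reach_outside v :
  ~~ connect (darc F) i v -> connect (darc G) (root_of F v) v.
Proof.
move: v; apply: (height_ind fF.2) => w IH niw.
case: (boolP (is_root F w)) => [rw|/not_rootP[u uw]].
  by rewrite root_of_root // connect0.
have wi : w != i by apply: contraNneq niw => ->; apply: connect0.
have niu : ~~ connect (darc F) i u.
  by apply: contraNN niw => iu; apply: connect_trans iu (connect1 uw).
rewrite -(root_of_arc fF uw); apply: connect_trans (IH u uw niu) (connect1 _).
exact: reattach_keep.
Qed.

Lemma reattach_reach_subtree v :
  connect (darc F) i v -> connect (darc G) (root_of F k) v.
Proof.
move: v; apply: (height_ind fF.2) => w IH iw.
case: (eqVneq w i) => [->|wi].
  apply: connect_trans (reattach_reach_outside nik) (connect1 _).
  exact: exchange_new.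
have iw' : i != w by rewrite eq_sym.
have [u uw iu] := last_arc iw iw'.
by apply: connect_trans (IH u uw iu) (connect1 _); apply: reattach_keep.
Qed.

Lemma root_of_reattach v :
  root_of G v = if connect (darc F) i v then root_of F k else root_of F v.
Proof.
have fG := reattach_dforest.
case: ifP => iv; apply: (root_ofE fG).
- apply: reattach_is_root; first exact: root_of_is_root.
  by apply: contraNneq nik => <-; apply: root_of_reach.
- exact: reattach_reach_subtree.
- apply: reattach_is_root; first exact: root_of_is_root.
  by apply/eqP => e; move: (root_of_reach fF v); rewrite e iv.
- by apply: reattach_reach_outside; rewrite iv.
Qed.

End Reattach.

Section Reroot.
Variables (F : arc_set n) (r w x : 'I_n).
Hypotheses (fF : dforest F) (rr : is_root F r) (wr : w != r).
Hypothesis wx : connect (darc F) w x.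
Local Notation G := (reroot F r w x).

Lemma reroot_keep u v : (u, v) \in F -> v != w -> (u, v) \in G.
Proof. by move=> uv vw; rewrite exchangeE uv vw. Qed.

(* Re-rooting at w and hanging the old root r below a vertex x of the subtree
   of w keeps a forest: everything outside that subtree is lifted above x. *)
Lemma reroot_dforest : dforest G.
Proof.
case: fF => i1 [h hP].
have nwr : ~~ connect (darc F) w r.
  by apply/negP => /(reach_root rr) e; move: wr; rewrite e eqxx.
split.
  move=> u u' v; rewrite !exchangeE.
  case/orP=> [/andP[uv vw]|/eqP[eu ev]]; case/orP=> [/andP[u'v vw']|/eqP[eu' ev']].
  - exact: i1 uv u'v.
  - by subst v; move/is_rootP: rr => /(_ u); rewrite uv.
  - by subst v; move/is_rootP: rr => /(_ u'); rewrite u'v.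
  - by rewrite eu eu'.
exists (fun v => h v + (~~ connect (darc F) w v) * (h x).+1)%N.
move=> u v; rewrite exchangeE => /orP[/andP[uv vw]|/eqP[-> ->]].
  case: (boolP (connect (darc F) w u)) => wu.
    by rewrite (connect_trans wu (connect1 uv)) /= !mul0n !addn0; apply: hP.
  by rewrite (unreachable_arc i1 uv vw wu) ltn_add2r; apply: hP.
by rewrite wx nwr mul0n addn0 mul1n addnS ltnS leq_addl.
Qed.

Lemma reroot_is_root : is_root G w.
Proof.
apply/is_rootP => u; rewrite exchangeE eqxx andbF /= xpair_eqE negb_and.
by rewrite eq_sym wr orbT.
Qed.

Lemma reroot_reach_subtree v : connect (darc F) w v -> connect (darc G) w v.
Proof.
move: v; apply: (height_ind fF.2) => v IH wv.
case: (eqVneq v w) => [->|vw]; first exact: connect0.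
have wv' : w != v by rewrite eq_sym.
have [u uv wu] := last_arc wv wv'.
by apply: connect_trans (IH u uv wu) (connect1 _); apply: reroot_keep.
Qed.

Lemma reroot_reach_rest v : ~~ connect (darc F) w v -> root_of F v = r ->
  connect (darc G) r v.
Proof.
move: v; apply: (height_ind fF.2) => v IH nwv rv.
case: (boolP (is_root F v)) => [rtv|/not_rootP[u uv]].
  by rewrite -rv root_of_root // connect0.
have vw : v != w by apply: contraNneq nwv => ->; apply: connect0.
have nwu : ~~ connect (darc F) w u.
  by apply: contraNN nwv => wu; apply: connect_trans wu (connect1 uv).
apply: connect_trans (IH u uv nwu _) (connect1 _); first by rewrite (root_of_arc fF uv).
exact: reroot_keep.
Qed.

Hypothesis rw : root_of F w = r.

Lemma reroot_reach_other v : root_of F v != r -> connect (darc G) (root_of F v) v.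
Proof.
move: v; apply: (height_ind fF.2) => v IH rv.
case: (boolP (is_root F v)) => [rtv|/not_rootP[u uv]].
  by rewrite root_of_root // connect0.
have vw : v != w by apply: contraNneq rv => ->; rewrite rw.
rewrite -(root_of_arc fF uv); apply: connect_trans (IH u uv _) (connect1 _).
  by rewrite (root_of_arc fF uv).
exact: reroot_keep.
Qed.

Lemma root_of_reroot v : root_of G v = if root_of F v == r then w else root_of F v.
Proof.
have fG := reroot_dforest.
case: ifP => [/eqP rv|/negbT rv]; apply: (root_ofE fG).
- exact: reroot_is_root.
- case: (boolP (connect (darc F) w v)) => wv; first exact: reroot_reach_subtree.
  apply: connect_trans (reroot_reach_rest wv rv).
  apply: connect_trans (reroot_reach_subtree wx) (connect1 _).
  exact: exchange_new.
- apply/is_rootP => u; rewrite exchangeE negb_or negb_and.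
  have /is_rootP/(_ u)-> := root_of_is_root fF v.
  by rewrite /= xpair_eqE negb_and rv orbT.
- exact: reroot_reach_other.
Qed.

End Reroot.

Definition parent F v := odflt v [pick u | (u, v) \in F].
Definition child F j m := odflt j [pick c | ((j, c) \in F) && connect (darc F) c m].

Lemma parentE F u v : indeg_le1 F -> (u, v) \in F -> parent F v = u.
Proof.
move=> i1 uv; rewrite /parent; case: pickP => [u' u'v|/(_ u)]; last by rewrite uv.
exact: i1 u'v uv.
Qed.

Lemma childP F j m : connect (darc F) j m -> j != m ->
  (j, child F j m) \in F /\ connect (darc F) (child F j m) m.
Proof.
move=> jm njm; rewrite /child; case: pickP => [c /andP[]//|none].
by have [c jc cm] := first_arc jm njm; move: (none c); rewrite jc cm.
Qed.

Lemma childE F j c m : dforest F -> (j, c) \in F -> connect (darc F) c m ->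
  child F j m = c.
Proof.
move=> fF jc cm.
have jm : connect (darc F) j m := connect_trans (connect1 jc) cm.
have njm : j != m.
  by apply/eqP => e; subst m; move: (arc_acyclic fF.2 jc); rewrite cm.
have [jc' c'm] := childP jm njm.
suff sibling d d' : (j, d) \in F -> (j, d') \in F -> connect (darc F) d d' -> d = d'.
  by case/orP: (ancestors_comparable fF c'm cm) => ?; [|apply/esym]; apply: sibling.
move=> jd jd' dd'; apply/eqP; apply/negPn/negP => dnd'.
have [u ud' du] := last_arc dd' dnd'.
by rewrite (fF.1 _ _ _ ud' jd') in du; move: (arc_acyclic fF.2 jd); rewrite du.
Qed.

End Exchange.

Local Open Scope ring_scope.

Lemma sum_restrict (V : nmodType) (I : finType) (P C : pred I) (g : I -> V) :
  (forall x, P x -> ~~ C x -> g x = 0) ->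
  \sum_(x | P x) g x = \sum_(x | P x && C x) g x.
Proof.
move=> H; rewrite (bigID C) /= [X in _ + X]big1 ?addr0 //.
by move=> x /andP[]; apply: H.
Qed.

Section KirchhoffForests.
Variables (R : realFieldType) (n : nat) (a : 'M[R]_n).
Hypothesis a_diag : forall i, a i i = 0.
Hypothesis a_nneg : forall i j, 0 <= a i j.
Implicit Types F G : arc_set n.

Lemma a_eq0 u v : ~~ (0 < a u v) -> a u v = 0.
Proof. by rewrite lt0r a_nneg andbT negbK => /eqP. Qed.

Lemma subgraphP F :
  reflect (forall u v, (u, v) \in F -> (u != v) && (0 < a v u)) (subgraph a F).
Proof.
apply: (iffP forall_inP) => [H u v uv|H [u v] uv]; first exact: H uv.
exact: H.
Qed.

Lemma subgraph_arc F u v : subgraph a F -> (u, v) \in F -> 0 < a v u.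
Proof. by move/subgraphP => H /H /andP[]. Qed.

Lemma arc_neq u v : 0 < a v u -> u != v.
Proof. by apply: contraTneq => ->; rewrite a_diag ltxx. Qed.

Lemma subgraph_exchange F w e : subgraph a F -> 0 < a e.2 e.1 ->
  subgraph a (exchange F w e).
Proof.
move=> /subgraphP sF; case: e => x y /= axy; apply/subgraphP => u v.
by rewrite exchangeE => /orP[/andP[uv _]|/eqP[-> ->]]; [exact: sF | rewrite axy arc_neq].
Qed.

Lemma max_out_forestP F : max_out_forest a F <->
  [/\ subgraph a F, dforest F & #|F| = max_forest_size a].
Proof.
rewrite /max_out_forest; split.
  by case/andP=> /out_forestP [sF fF] /eqP cF.
by case=> sF fF cF; rewrite cF eqxx andbT; apply/out_forestP.
Qed.

Lemma out_forest_card_le F : subgraph a F -> dforest F ->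
  (#|F| <= max_forest_size a)%N.
Proof.
move=> sF fF; rewrite /max_forest_size.
by apply: (leq_bigmax_cond (P := fun F => out_forest a F)); apply/out_forestP.
Qed.

Lemma exists_max_out_forest : exists F, max_out_forest a F.
Proof.
have : (0 < #|[pred F | out_forest a F]|)%N.
  apply/card_gt0P; exists set0; rewrite inE; apply/out_forestP; split.
    by apply/subgraphP => u v; rewrite inE.
  by split; [move=> u u' v; rewrite inE | exists (fun _ => 0%N) => u v; rewrite inE].
case/(eq_bigmax_cond (fun F : arc_set n => #|F|)) => F; rewrite inE => oF e.
by exists F; rewrite /max_out_forest oF /max_forest_size e /=.
Qed.

Lemma reattach_max F i k p : max_out_forest a F -> (p, i) \in F ->
  ~~ connect (darc F) i k -> 0 < a i k -> max_out_forest a (reattach F i k).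
Proof.
case/max_out_forestP=> sF fF cF pi nik aik; apply/max_out_forestP; split.
- exact: subgraph_exchange.
- exact: reattach_dforest.
- by rewrite (exchange_card fF.1 pi (reattach_fresh k fF.1 pi)).
Qed.

Lemma reroot_max F r w x p : max_out_forest a F -> is_root F r -> (p, w) \in F ->
  connect (darc F) w x -> 0 < a r x -> max_out_forest a (reroot F r w x).
Proof.
case/max_out_forestP=> sF fF cF rr pw wx arx.
have wr : w != r by apply: contraTneq rr => <-; apply/not_rootP; exists p.
apply/max_out_forestP; split.
- exact: subgraph_exchange.
- exact: reroot_dforest.
- by rewrite (exchange_card fF.1 pw (root_fresh x (p, w) rr)).
Qed.

(* In a maximum out-forest, an arc of the digraph entering a root j comes
   from the tree of j: otherwise attaching j would give a larger out-forest. *)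
Lemma max_forest_root_arc F j m : max_out_forest a F -> is_root F j ->
  0 < a j m -> root_of F m = j.
Proof.
case/max_out_forestP=> sF fF cF rj ajm; apply/eqP/negPn/negP => nm.
have njm : ~~ connect (darc F) j m.
  by apply: contra nm => jm; rewrite -(root_of_connect fF jm) root_of_root.
have sG : subgraph a (reattach F j m) by apply: subgraph_exchange.
have := out_forest_card_le sG (reattach_dforest fF njm).
by rewrite reattach_root_card // cF ltnn.
Qed.

Lemma weight_gt0 F : subgraph a F -> 0 < weight a F.
Proof. by move=> sF; apply: prodr_gt0 => [[u v]] /(subgraph_arc sF). Qed.

Lemma weight_exchange F w e p : indeg_le1 F -> (p, w) \in F -> e \notin F :\ (p, w) ->
  weight a (exchange F w e) * a w p = weight a F * a e.2 e.1.
Proof.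
move=> i1 pw eF; rewrite /weight /exchange (drop_in_arc i1 pw) setUC big_setU1 //=.
by rewrite (big_setD1 (p, w) pw) /= mulrAC [RHS]mulrAC [a w p * _]mulrC.
Qed.

Definition total_weight := \sum_(F | max_out_forest a F) weight a F.
Definition root_weight i j :=
  \sum_(F | max_out_forest a F && (root_of F i == j)) weight a F.

Lemma total_weight_gt0 : 0 < total_weight.
Proof.
have [F0 mF0] := exists_max_out_forest; rewrite /total_weight (bigD1 F0) //=.
have wF F : max_out_forest a F -> 0 < weight a F.
  by case/max_out_forestP=> sF _ _; apply: weight_gt0.
by rewrite ltr_wpDr ?wF // sumr_ge0 // => F /andP[/wF/ltW].
Qed.

Lemma root_weightE i j :
  root_weight i j = \sum_(F | max_out_forest a F) weight a F * (root_of F i == j)%:R.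
Proof.
rewrite /root_weight big_mkcondr; apply: eq_bigr => F _.
by case: eqP; rewrite ?mulr1 ?mulr0.
Qed.

Lemma JbarE i j : Jbar a i j = root_weight i j / total_weight.
Proof.
rewrite /Jbar mxE; congr (_ / _); apply: eq_bigl => F.
case: (boolP (max_out_forest a F)) => // /max_out_forestP[_ fF _].
by rewrite in_tree_rootedE.
Qed.

Lemma kirchhoffE i k : kirchhoff a i k = (i == k)%:R * (\sum_l a i l) - a i k.
Proof.
rewrite mxE; case: (eqVneq i k) => [<-|ik]; last by rewrite mul0r sub0r.
by rewrite [in RHS](bigD1 i) //= a_diag add0r mul1r subr0.
Qed.

Lemma kirchhoff_mulE p (M : 'M[R]_(n, p)) i j :
  (kirchhoff a *m M) i j = \sum_k a i k * (M i j - M k j).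
Proof.
rewrite mxE; under eq_bigr do rewrite kirchhoffE mulrBl.
rewrite sumrB [X in X - _](bigD1 i) //= eqxx mul1r [X in _ + X - _]big1 ?addr0.
  by under [RHS]eq_bigr do rewrite mulrBr; rewrite sumrB mulr_suml.
by move=> k ki; rewrite eq_sym (negbTE ki) !mul0r.
Qed.

Lemma mul_kirchhoffE p (M : 'M[R]_(p, n)) i j :
  (M *m kirchhoff a) i j = M i j * (\sum_l a j l) - \sum_k M i k * a k j.
Proof.
rewrite mxE; under eq_bigr do rewrite kirchhoffE mulrBr.
rewrite sumrB [X in X - _](bigD1 j) //= eqxx mul1r [X in _ + X - _]big1 ?addr0 //.
by move=> k kj; rewrite (negbTE kj) mul0r mulr0.
Qed.

(* L J = 0.  Entry (i, j) of L J is, up to the total weight, a sum over pairs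
   (k, F) with F maximum of a_ik w(F) ([root_of F i = j] - [root_of F k = j]).
   Pairs with i and k in the same tree contribute 0; on the other pairs,
   re-attaching i below k is an involution preserving a_ik w(F) and swapping
   the two brackets. *)
Section ReattachInvolution.
Variable i : 'I_n.

Definition cross_pair (p : 'I_n * arc_set n) :=
  [&& max_out_forest a p.2, 0 < a i p.1 & root_of p.2 i != root_of p.2 p.1].

Definition swap_parent (p : 'I_n * arc_set n) := (parent p.2 i, reattach p.2 i p.1).

Lemma swap_parentP p : cross_pair p ->
  [/\ cross_pair (swap_parent p), swap_parent (swap_parent p) = p &
      forall j, a i (swap_parent p).1 * weight a (swap_parent p).2
        * (root_of (swap_parent p).2 i == j)%:R =
      a i p.1 * weight a p.2 * (root_of p.2 p.1 == j)%:R].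
Proof.
case: p => k F /and3P[/= mF aik rik]; have /max_out_forestP[sF fF _] := mF.
have /not_rootP[q qi] : ~~ is_root F i.
  apply: contra rik => ri; rewrite (max_forest_root_arc mF ri aik).
  by rewrite root_of_root.
have nik : ~~ connect (darc F) i k.
  by apply: contra rik => ik; rewrite (root_of_connect fF ik).
have fG := reattach_dforest fF nik.
have rGi : root_of (reattach F i k) i = root_of F k.
  by rewrite root_of_reattach // connect0.
have rGq : root_of (reattach F i k) q = root_of F i.
  by rewrite root_of_reattach // (negbTE (arc_acyclic fF.2 qi)) (root_of_arc fF qi).
rewrite /swap_parent /= (parentE fF.1 qi); split.
- by rewrite /cross_pair /= (reattach_max mF qi nik aik) (subgraph_arc sF qi) rGi rGq eq_sym.
- by rewrite (parentE fG.1 (exchange_new F i (k, i))) (reattach_inv k fF.1 qi).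
- move=> j; rewrite rGi [a i q * _]mulrC (weight_exchange fF.1 qi (reattach_fresh k fF.1 qi)).
  by rewrite [a i k * _]mulrC.
Qed.

Definition reparent p := if cross_pair p then swap_parent p else p.

Lemma reparent_inv : involutive reparent.
Proof.
move=> p; rewrite /reparent; case: (boolP (cross_pair p)) => cp; last by rewrite (negbTE cp).
by have [-> -> _] := swap_parentP cp.
Qed.

Lemma cross_pair_reparent p : cross_pair (reparent p) = cross_pair p.
Proof.
rewrite /reparent; case: (boolP (cross_pair p)) => cp; last by rewrite (negbTE cp).
by have [-> _ _] := swap_parentP cp.
Qed.

Lemma kirchhoff_root_weight j : \sum_k a i k * (root_weight i j - root_weight k j) = 0.
Proof.
have -> : \sum_k a i k * (root_weight i j - root_weight k j) =
  \sum_(p : 'I_n * arc_set n | max_out_forest a p.2)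
     (a i p.1 * weight a p.2 * (root_of p.2 i == j)%:R -
      a i p.1 * weight a p.2 * (root_of p.2 p.1 == j)%:R).
  rewrite (eq_bigr (fun k => \sum_(F | max_out_forest a F)
     (a i k * weight a F * (root_of F i == j)%:R -
      a i k * weight a F * (root_of F k == j)%:R))) => [|k _]; first by rewrite pair_big.
  rewrite !root_weightE -sumrB mulr_sumr; apply: eq_bigr => F _.
  by rewrite mulrBr !mulrA.
rewrite (sum_restrict (C := fun p => (0 < a i p.1) && (root_of p.2 i != root_of p.2 p.1))).
  rewrite sumrB; apply/eqP; rewrite subr_eq0; apply/eqP.
  rewrite (reindex_inj (inv_inj reparent_inv)) /=.
  apply: eq_big => p; first exact: (cross_pair_reparent p).
  move=> cp; have {}cp : cross_pair p by rewrite -cross_pair_reparent.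
  by rewrite /reparent cp; have [_ _ ->] := swap_parentP cp.
move=> [k F] /= _; rewrite negb_and negbK => /orP[/a_eq0->|/eqP->].
  by rewrite !mul0r subrr.
by rewrite subrr.
Qed.

End ReattachInvolution.

Lemma kirchhoff_mul_Jbar : kirchhoff a *m Jbar a = 0.
Proof.
apply/matrixP => i j; rewrite kirchhoff_mulE [RHS]mxE.
under eq_bigr do rewrite !JbarE -mulrBl mulrA.
by rewrite -mulr_suml kirchhoff_root_weight mul0r.
Qed.

(* J L = 0.  After multiplying by the total weight, entry (i, j) of J L
   compares the sum of a_jm w(F) over the pairs (m, F) with i in the tree of
   j, and the sum of a_kj w(F) over the pairs (k, F) with i in the tree of k.
   Given (m, F), m lies in the tree of j; re-rooting that tree at the child c
   of j towards m and hanging j below m yields the pair (c, G), and this is a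
   weight-preserving bijection whose inverse makes j a root below which the
   old root k is hung. *)
Section RerootBijection.
Variables i j : 'I_n.

Definition arc_into_root (x : 'I_n * arc_set n) :=
  [&& max_out_forest a x.2, root_of x.2 i == j & 0 < a j x.1].
Definition arc_from_root (y : 'I_n * arc_set n) :=
  [&& max_out_forest a y.2, root_of y.2 i == y.1 & 0 < a y.1 j].

Definition reroot_below (x : 'I_n * arc_set n) :=
  (child x.2 j x.1, reroot x.2 j (child x.2 j x.1) x.1).
Definition reroot_at_j (y : 'I_n * arc_set n) :=
  (parent y.2 j, reroot y.2 y.1 j j).

Lemma reroot_belowP x : arc_into_root x ->
  [/\ arc_from_root (reroot_below x), reroot_at_j (reroot_below x) = x &
      a (reroot_below x).1 j * weight a (reroot_below x).2 = a j x.1 * weight a x.2].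
Proof.
case: x => m F /and3P[/= mF /eqP rFi ajm]; have /max_out_forestP[sF fF _] := mF.
have rj : is_root F j by rewrite -rFi; apply: root_of_is_root.
have jm : connect (darc F) j m.
  by rewrite -(max_forest_root_arc mF rj ajm); apply: root_of_reach.
have jnm : j != m by rewrite eq_sym arc_neq.
have [jc cm] := childP jm jnm; set c := child F j m in jc cm *.
have rc : root_of F c = j by rewrite -(root_of_arc fF jc) root_of_root.
have cj : c != j by rewrite eq_sym arc_neq ?(subgraph_arc sF jc).
rewrite /reroot_below /reroot_at_j /=; split.
- rewrite /arc_from_root /= (reroot_max mF rj jc cm ajm) (subgraph_arc sF jc).
  by rewrite root_of_reroot // rFi !eqxx.
- have fG := reroot_dforest fF rj cj cm.
  by rewrite (parentE fG.1 (exchange_new _ _ _)) (reroot_inv m fF.1 rj jc).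
- by rewrite mulrC (weight_exchange fF.1 jc (root_fresh m (j, c) rj)) mulrC.
Qed.

Lemma reroot_at_jP y : arc_from_root y ->
  arc_into_root (reroot_at_j y) /\ reroot_below (reroot_at_j y) = y.
Proof.
case: y => k F /and3P[/= mF /eqP rFi akj]; have /max_out_forestP[sF fF _] := mF.
have rk : is_root F k by rewrite -rFi; apply: root_of_is_root.
have rjk : root_of F j = k := max_forest_root_arc mF rk akj.
have jk : j != k by rewrite arc_neq.
have /not_rootP[p pj] : ~~ is_root F j.
  by apply: contra jk => rtj; rewrite -rjk root_of_root.
have fG := reroot_dforest fF rk jk (connect0 _ j).
rewrite /reroot_at_j /= (parentE fF.1 pj); split.
  rewrite /arc_into_root /= (reroot_max mF rk pj (connect0 _ j) akj).
  by rewrite root_of_reroot // rFi !eqxx (subgraph_arc sF pj).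
have kp : connect (darc (reroot F k j j)) k p.
  apply: reroot_reach_rest => //; first exact: arc_acyclic fF.2 pj.
  by rewrite (root_of_arc fF pj).
rewrite /reroot_below /= (childE fG (exchange_new _ _ _) kp).
by rewrite (reroot_inv j fF.1 rk pj).
Qed.

Lemma root_weight_kirchhoff :
  root_weight i j * (\sum_l a j l) = \sum_k root_weight i k * a k j.
Proof.
have -> : root_weight i j * (\sum_l a j l) =
    \sum_(x : 'I_n * arc_set n | arc_into_root x) a j x.1 * weight a x.2.
  rewrite mulr_sumr (eq_bigr (fun l => \sum_(F | max_out_forest a F && (root_of F i == j))
    a j l * weight a F)) => [|l _]; last first.
    by rewrite /root_weight mulr_suml; apply: eq_bigr => F _; rewrite mulrC.
  rewrite pair_big /= (sum_restrict (C := fun x => 0 < a j x.1)).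
    by apply: eq_bigl => x; rewrite /arc_into_root andbA.
  by move=> x _ /a_eq0 ->; rewrite mul0r.
have -> : \sum_k root_weight i k * a k j =
    \sum_(y : 'I_n * arc_set n | arc_from_root y) a y.1 j * weight a y.2.
  rewrite (eq_bigr (fun k => \sum_(F | max_out_forest a F && (root_of F i == k))
    a k j * weight a F)) => [|k _]; last first.
    by rewrite /root_weight mulr_suml; apply: eq_bigr => F _; rewrite mulrC.
  rewrite pair_big_dep /= (sum_restrict (C := fun x => 0 < a x.1 j)).
    by apply: eq_bigl => x; rewrite /arc_from_root andbA.
  by move=> x _ /a_eq0 ->; rewrite mul0r.
rewrite [RHS](reindex_onto reroot_below reroot_at_j) => [|y /reroot_at_jP[]//].
apply: eq_big => x; last by case/reroot_belowP.
apply/idP/andP => [Px|[Qx /eqP <-]]; last by case: (reroot_at_jP Qx).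
by have [-> -> _] := reroot_belowP Px.
Qed.

End RerootBijection.

Lemma Jbar_mul_kirchhoff : Jbar a *m kirchhoff a = 0.
Proof.
apply/matrixP => i j; rewrite mul_kirchhoffE [RHS]mxE.
under [X in _ - X]eq_bigr do rewrite JbarE mulrAC.
by rewrite JbarE mulrAC -mulr_suml -mulrBl root_weight_kirchhoff subrr mul0r.
Qed.

Definition gamma : rel 'I_n := fun u v => 0 < a v u.

Lemma forest_path_gamma F u v : subgraph a F -> connect (darc F) u v -> connect gamma u v.
Proof. by move=> sF; apply: connect_sub => x y xy; apply/connect1/(subgraph_arc sF). Qed.

(* If L x = 0, then x_q is a weighted mean of the values of x at the
   in-neighbours of q; if none of them exceeds x_q, they all equal x_q. *)
Lemma harmonic_local_max (x : 'cV[R]_n) q k : kirchhoff a *m x = 0 ->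
  (forall l, gamma l q -> x l 0 <= x q 0) -> gamma k q -> x k 0 = x q 0.
Proof.
move=> Lx qmax kq.
have e : \sum_l a q l * (x q 0 - x l 0) = 0 by rewrite -kirchhoff_mulE Lx mxE.
have ge0 l : true -> 0 <= a q l * (x q 0 - x l 0).
  move=> _; case: (boolP (gamma l q)) => lq; last by rewrite (a_eq0 lq) mul0r.
  by rewrite mulr_ge0 ?a_nneg // subr_ge0 qmax.
move/eqP: (@psumr_eq0P _ _ _ _ ge0 e k isT); rewrite mulf_eq0 (gt_eqF kq) /= subr_eq0.
by move/eqP.
Qed.

Lemma harmonic_max_backward (x : 'cV[R]_n) (B : pred 'I_n) v q :
  kirchhoff a *m x = 0 -> (forall u w, gamma u w -> B w -> B u) -> B v ->
  (forall u, B u -> x u 0 <= x v 0) -> connect gamma q v -> x q 0 = x v 0.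
Proof.
move=> Lx clB Bv vmax qv.
suff /andP[_ /eqP//] : B q && (x q 0 == x v 0).
apply: (connect_backward (Q := fun u => B u && (x u 0 == x v 0))) qv _; last first.
  by rewrite Bv eqxx.
move=> u w uw /andP[Bw /eqP xw]; rewrite (clB _ _ uw Bw) /=; apply/eqP.
rewrite -xw; apply: (harmonic_local_max Lx) => // l lw.
by rewrite xw; apply/vmax/(clB _ _ lw Bw).
Qed.

Lemma shrink_root_tree F r u w : max_out_forest a F -> is_root F r ->
  gamma u w -> root_of F w = r -> root_of F u != r ->
  [/\ max_out_forest a (reattach F w u), is_root (reattach F w u) r &
      [set v | root_of (reattach F w u) v == r] \proper [set v | root_of F v == r]].
Proof.
move=> mF rr uw wr ur; have /max_out_forestP[sF fF _] := mF.
have wnr : w != r.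
  by apply: contraNneq ur => ewr; rewrite (max_forest_root_arc mF rr) // -ewr.
have /not_rootP[p pw] : ~~ is_root F w.
  by apply: contra wnr => rw; rewrite -wr (root_of_root fF rw).
have nwu : ~~ connect (darc F) w u.
  by apply: contra ur => wu; rewrite -(root_of_connect fF wu) wr.
split; first exact: reattach_max mF pw nwu uw.
  by apply: reattach_is_root; rewrite // eq_sym.
apply/properP; split.
  apply/subsetP => v; rewrite !inE root_of_reattach //.
  by case: ifP => // _; rewrite (negbTE ur).
by exists w; rewrite !inE ?wr ?eqxx // root_of_reattach // connect0 (negbTE ur).
Qed.

(* Among the maximum out-forests
   rooted at r, one with the smallest tree at r has a tree closed under
   in-neighbours, and r reaches that whole tree. *)
Lemma root_closed F0 r q : max_out_forest a F0 -> is_root F0 r ->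
  connect gamma q r -> connect gamma r q.
Proof.
move=> mF0 rF0 qr; pose T F := [set v | root_of F v == r].
case: (@arg_minnP _ F0 (fun F => max_out_forest a F && is_root F r) (fun F => #|T F|)).
  by rewrite mF0 rF0.
move=> F /andP[mF rF] Fmin; have /max_out_forestP[sF fF _] := mF.
have closedT u w : gamma u w -> w \in T F -> u \in T F.
  rewrite !inE => uw wr; apply/negPn/negP => ur.
  have [mG rG lt] := shrink_root_tree mF rF uw (eqP wr) ur.
  by move: (Fmin _ (introT andP (conj mG rG))); rewrite leqNgt (proper_card lt).
have : q \in T F.
  apply: (connect_backward (Q := fun v => v \in T F)) qr _ => //.
  by rewrite inE root_of_root.
rewrite inE => /eqP <-; exact/(forest_path_gamma sF)/root_of_reach.
Qed.

(* A harmonic vector takes the same value at a root r of a maximum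
   out-forest and at the root of the tree containing r in any maximum
   out-forest F: both lie in the final class of r, where x is constant. *)
Lemma harmonic_root (x : 'cV[R]_n) F0 r F : kirchhoff a *m x = 0 ->
  max_out_forest a F0 -> is_root F0 r -> max_out_forest a F ->
  x (root_of F r) 0 = x r 0.
Proof.
move=> Lx mF0 rF0 /max_out_forestP[sF fF _].
pose B := [pred q | connect gamma q r].
have Br : B r by rewrite inE connect0.
case: (arg_maxP (fun q => x q 0) Br) => v Bv vmax.
have clB u w : gamma u w -> B w -> B u by rewrite !inE => uw; apply/connect_trans/connect1.
have toV q : B q -> x q 0 = x v 0.
  move=> Bq; apply: (harmonic_max_backward Lx clB Bv vmax).
  exact: connect_trans Bq (root_closed mF0 rF0 Bv).
by rewrite !toV // inE; apply/(forest_path_gamma sF)/root_of_reach.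
Qed.

(* A harmonic vector vanishing at the roots of a maximum out-forest is
   nonpositive: its maximum propagates back to the root of its tree. *)
Lemma harmonic_nonpos (y : 'cV[R]_n) F0 : kirchhoff a *m y = 0 ->
  max_out_forest a F0 -> (forall r, is_root F0 r -> y r 0 = 0) ->
  forall q, y q 0 <= 0.
Proof.
move=> Ly /max_out_forestP[sF fF _] y0 q.
case: (@arg_maxP _ _ _ q predT (fun q => y q 0) isT) => v _ vmax.
have := harmonic_max_backward (B := predT) Ly (fun _ _ _ _ => isT) isT (fun u _ => vmax u isT)
  (forest_path_gamma sF (root_of_reach fF v)).
by rewrite y0 ?root_of_is_root // => ->; apply: vmax.
Qed.

Lemma Jbar_root (x : 'cV[R]_n) F0 r : kirchhoff a *m x = 0 ->
  max_out_forest a F0 -> is_root F0 r -> (Jbar a *m x) r 0 = x r 0.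
Proof.
move=> Lx mF0 rr; rewrite mxE; under eq_bigr do rewrite JbarE mulrAC.
rewrite -mulr_suml.
have -> : \sum_j root_weight r j * x j 0 = total_weight * x r 0.
  under eq_bigr do rewrite root_weightE mulr_suml.
  rewrite exchange_big /= /total_weight mulr_suml; apply: eq_bigr => F mF.
  rewrite (bigD1 (root_of F r)) //= eqxx mulr1 big1 ?addr0 => [|j jr].
    by rewrite (harmonic_root Lx mF0 rr mF).
  by rewrite eq_sym (negbTE jr) mulr0 mul0r.
by rewrite mulrAC divff ?mul1r // gt_eqF // total_weight_gt0.
Qed.

(* J fixes the kernel of L: for x in N(L), x - J x is harmonic (as L J = 0)
   and vanishes at the roots of a maximum out-forest, hence is 0. *)
Lemma Jbar_fix (x : 'cV[R]_n) : kirchhoff a *m x = 0 -> Jbar a *m x = x.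
Proof.
move=> Lx; have [F0 mF0] := exists_max_out_forest.
set y := x - Jbar a *m x.
have Ly : kirchhoff a *m y = 0.
  by rewrite mulmxBr Lx mulmxA kirchhoff_mul_Jbar mul0mx subrr.
have y0 r : is_root F0 r -> y r 0 = 0.
  by move=> rr; rewrite 2!mxE (Jbar_root Lx mF0 rr) subrr.
have Lny : kirchhoff a *m (- y) = 0 by rewrite mulmxN Ly oppr0.
have ny0 r : is_root F0 r -> (- y) r 0 = 0 by move=> rr; rewrite mxE y0 ?oppr0.
suff /eqP : y = 0 by rewrite subr_eq0 => /eqP.
apply/matrixP => q k; rewrite (ord1 k) [RHS]mxE; apply/eqP.
rewrite eq_le (harmonic_nonpos Ly mF0 y0) /=.
by have := harmonic_nonpos Lny mF0 ny0 q; rewrite mxE oppr_le0.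
Qed.

(* L is singular: constant vectors lie in its kernel. *)
Lemma kirchhoff_singular : (0 < n)%N -> (\rank (kirchhoff a) < n)%N.
Proof.
move=> n_gt0; set u : 'rV[R]_n := const_mx 1.
have uk : (u <= kermx (kirchhoff a)^T)%MS.
  apply/sub_kermxP; apply: trmx_inj; rewrite trmx_mul trmxK trmx0.
  by apply/matrixP => i k; rewrite kirchhoff_mulE [RHS]mxE big1 // => l _; rewrite !mxE subrr mulr0.
have u0 : (0 < \rank u)%N.
  rewrite lt0n mxrank_eq0; apply/negP => /eqP/matrixP/(_ 0 (Ordinal n_gt0)).
  by rewrite !mxE => /eqP; rewrite oner_eq0.
by have := leq_trans u0 (mxrankS uk); rewrite mxrank_ker mxrank_tr subn_gt0.
Qed.

End KirchhoffForests.

Lemma range_colP (K : fieldType) (m : nat) {A : 'M[K]_m} {x : 'cV_m} :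
  (exists y : 'cV_m, x = A *m y) <-> (x^T <= A^T)%MS.
Proof.
split=> [[y ->]|/submxP[D eD]]; first by rewrite trmx_mul submxMl.
by exists D^T; rewrite -(trmxK x) eD trmx_mul trmxK.
Qed.

Lemma ker_colP (K : fieldType) (m : nat) {A : 'M[K]_m} {x : 'cV_m} :
  A *m x = 0 <-> (x^T <= kermx A^T)%MS.
Proof.
split=> [Ax|/sub_kermxP xA]; first by apply/sub_kermxP; rewrite -trmx_mul Ax trmx0.
by apply: trmx_inj; rewrite trmx_mul xA trmx0.
Qed.

Section Eigenprojection.
Variables (K : fieldType) (m : nat) (L P : 'M[K]_m).
Hypotheses (LP0 : L *m P = 0) (PL0 : P *m L = 0).
Hypothesis Pfix : forall x : 'cV_m, L *m x = 0 -> P *m x = x.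

(* Each column of P lies in N(L), hence is fixed by P. *)
Lemma proj_idem : P *m P = P.
Proof.
apply/matrixP => i j.
have LPj : L *m colsub (fun _ : 'I_1 => j) P = 0.
  by rewrite mulmx_colsub LP0; apply/matrixP => ? ?; rewrite !mxE.
by have /matrixP/(_ i 0) := Pfix LPj; rewrite mulmx_colsub !mxE.
Qed.

Lemma proj_range x : (exists y : 'cV_m, x = P *m y) <-> L *m x = 0.
Proof.
split=> [[y ->]|Lx]; first by rewrite mulmxA LP0 mul0mx.
by exists x; rewrite Pfix.
Qed.

(* N(P) = R(L): R(L) is contained in N(P), and the dimensions agree since
   rank P = dim N(L). *)
Lemma proj_kernel x : P *m x = 0 <-> exists y : 'cV_m, x = L *m y.
Proof.
have sLk : (L^T <= kermx P^T)%MS by apply/sub_kermxP; rewrite -trmx_mul PL0 trmx0.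
have skP : (kermx L^T <= P^T)%MS.
  apply/rV_subP => u /sub_kermxP uL.
  have Lu : L *m u^T = 0 by apply: trmx_inj; rewrite trmx_mul trmxK uL trmx0.
  by rewrite -(trmxK u) -(Pfix Lu) trmx_mul trmxK submxMl.
have ker_eq : (kermx P^T :=: L^T)%MS.
  apply/eqmxP; rewrite /eqmx sLk andbT -(mxrank_leqif_sup sLk).2 eqn_leq (mxrankS sLk).
  have := mxrankS skP; rewrite !mxrank_ker !mxrank_tr => rk.
  by rewrite leq_subLR addnC -leq_subLR.
split=> [/ker_colP|/range_colP xL]; first by rewrite ker_eq => /range_colP.
by apply/ker_colP; rewrite ker_eq.
Qed.

(* N(L^2) = N(L), hence rank L^2 = rank L. *)
Lemma rank_sq : \rank (L *m L) = \rank L.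
Proof.
apply/eqP; rewrite eqn_leq mxrankM_maxl /=.
have sub : (kermx (L *m L)^T <= kermx L^T)%MS.
  apply/rV_subP => u /sub_kermxP uLL; apply/sub_kermxP.
  have LLu : L *m (L *m u^T) = 0.
    by rewrite mulmxA; apply: trmx_inj; rewrite trmx_mul trmxK uLL trmx0.
  by apply: trmx_inj; rewrite trmx_mul trmxK -(Pfix LLu) mulmxA PL0 mul0mx trmx0.
have := mxrankS sub; rewrite !mxrank_ker !mxrank_tr.
by rewrite leq_sub2lE // rank_leq_col.
Qed.

Lemma index_one : (\rank L < m)%N -> mxindex L = 1%N.
Proof.
move=> singL; rewrite /mxindex; case: ex_minnP => k /eqP Hk Hmin.
have : (k <= 1)%N by apply: Hmin; rewrite expr1 expr2 -mulmxE rank_sq.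
case: k Hk {Hmin} => [|[|k]] // Hk _.
by move: singL; rewrite -(expr1 L) Hk expr0 mxrank1 ltnn.
Qed.

End Eigenprojection.

Theorem proposition6 (R : realFieldType) (n : nat) (a : 'M[R]_n)
    (a_diag : forall i, a i i = 0) (a_nneg : forall i j, 0 <= a i j) :
  let L := kirchhoff a in
  let J := Jbar a in
  let nu := mxindex L in
  [/\ J *m J = J,
      (forall x : 'cV[R]_n, (exists y : 'cV[R]_n, x = J *m y) <-> L ^+ nu *m x = 0),
      (forall x : 'cV[R]_n, J *m x = 0 <-> (exists y : 'cV[R]_n, x = L ^+ nu *m y))
    & (0 < n)%N -> nu = 1%N].
Proof.
move=> L J nu.
have LJ : L *m J = 0 := kirchhoff_mul_Jbar a_diag a_nneg.
have JL : J *m L = 0 := Jbar_mul_kirchhoff a_diag a_nneg.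
have Jfix := Jbar_fix a_diag a_nneg.
have JJ := proj_idem LJ Jfix.
case: (posnP n) => [n0|n_gt0].
  have x0 (x : 'cV[R]_n) : x = 0 by move: x; rewrite n0 => x; apply: flatmx0.
  split=> // x; rewrite (x0 x) !mulmx0; split=> // _; by exists 0; rewrite mulmx0.
have nu1 : nu = 1%N := index_one JL Jfix (kirchhoff_singular a_diag n_gt0).
rewrite nu1 expr1; split=> // x; [exact: proj_range | exact: proj_kernel].
Qed.
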